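(* Let $\Phi$ be a Markov Logic Network with largest formula arity $d$, let $n,m$ be positive integers, and let $\omega$ be an interpretation on $[n+m]$. Then $$w(\omega) \leq w(\omega \downarrow [n]) \times w(\omega \downarrow [\bar{n}]) \times \prod_{k \in [d]} (w^{max}_{k})^{ \binom{n+m}{k} - \binom{n}{k} - \binom{m}{k}}$$ and $$w(\omega) \geq w(\omega \downarrow [n]) \times w(\omega \downarrow [\bar{n}]) \times \prod_{k \in [d]} (w^{min}_{k})^{ \binom{n+m}{k} - \binom{n}{k} - \binom{m}{k}},$$ where $[\bar n]=\{n+1,\dots,n+m\}$.
   Context: Fix a finite function-free relational first-order signature $\mathcal{R}$. For a positive integer $N$ write $[N]=\{1,\dots,N\}$. For a finite set $D$ of constants, a ground atom over $D$ is $R(a_1,\dots,a_r)$ with $R\in\mathcal{R}$ of arity $r$ and $a_1,\dots,a_r\in D$. An interpretation on $D$ is a map assigning true/false to every ground atom over $D$; $\Omega^{(N)}$ is the set of interpretations on $[N]$. For an interpretation $\omega$ on $D$ and $I\subseteq D$, $\omega\downarrow I$ is the interpretation on $I$ obtained by restricting $\omega$ to the ground atoms all of whose arguments lie in $I$. A Markov Logic Network (MLN) $\Phi$ is a finite set of pairs $(\phi_i,a_i)$, where $\phi_i$ is a function-free, quantifier-free first-order formula over $\mathcal{R}$ and $a_i\in\mathbb{R}$. The arity of $\phi_i$ is the number of distinct variables in it; $\Phi_k$ is the set of pairs whose formula has arity $k$. Convention: a formula with $k$ variables is grounded only by substituting $k$ pairwise distinct constants for its variables; for an interpretation $\omega$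 on a finite set $D$, $N(\phi,\omega)$ is the number of injective assignments of the variables of $\phi$ to elements of $D$ under which $\phi$ is true in $\omega$. The weight of an interpretation $\omega$ on any finite domain is $w(\omega)=\exp\bigl(\sum_{(\phi_i,a_i)\in\Phi}a_iN(\phi_i,\omega)\bigr)$, and its $k$-weight is $w_k(\omega)=\exp\bigl(\sum_{(\phi_i,a_i)\in\Phi_k}a_iN(\phi_i,\omega)\bigr)$. $w_k^{max}$ and $w_k^{min}$ denote the maximum and minimum of $w_k(\omega')$ over all interpretations $\omega'$ on a $k$-element domain (e.g. on $[k]$). Binomial coefficients $\binom{a}{k}$ with $k>a$ are $0$. *)

From HB Require Import structures.
From mathcomp Require Import all_boot all_order all_algebra.
From mathcomp Require Import reals sequences exp.
Set Implicit Arguments. Unset Strict Implicit. Unset Printing Implicit Defensive.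
Import Order.TTheory GRing.Theory Num.Theory.
Local Open Scope ring_scope.

Section MLN.
Variable Rel : finType.
Variable ar : Rel -> nat.

Inductive formula :=
| FAtom (r : Rel) of (ar r).-tuple nat
| FEq of nat & nat
| FTrue
| FFalse
| FNot of formula
| FAnd of formula & formula
| FOr of formula & formula.

Fixpoint fvars (f : formula) : seq nat :=
  match f with
  | FAtom _ t => val t
  | FEq x y => [:: x; y]
  | FTrue | FFalse => [::]
  | FNot g => fvars g
  | FAnd g h | FOr g h => fvars g ++ fvars h
  end.

Definition vars (f : formula) : seq nat := undup (fvars f).
Definition arity (f : formula) : nat := size (vars f).

Definition gatom (D : finType) := {r : Rel & (ar r).-tuple D}.
Definition interp (D : finType) := {ffun gatom D -> bool}.

Fixpoint holds (D : finType) (om : interp D) (s : nat -> option D)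
    (f : formula) : bool :=
  match f with
  | FAtom r t =>
      match (insub (pmap id (map s (val t))) : option ((ar r).-tuple D)) with
      | Some u => om (@Tagged Rel r (fun r => (ar r).-tuple D) u)
      | None => false
      end
  | FEq x y => s x == s y
  | FTrue => true
  | FFalse => false
  | FNot g => ~~ holds om s g
  | FAnd g h => holds om s g && holds om s h
  | FOr g h => holds om s g || holds om s h
  end.

(* the assignment of the variables of f given by g : 'I_(arity f) -> D,
   the i-th distinct variable of f being sent to g i *)
Definition assign (D : finType) (f : formula) (g : {ffun 'I_(arity f) -> D})
    (x : nat) : option D :=
  omap g (insub (index x (vars f))).

Definition Ncount (D : finType) (om : interp D) (f : formula) : nat :=
  #|[set g : {ffun 'I_(arity f) -> D} |
      injectiveb (g : 'I_(arity f) -> D) && holds om (assign g) f]|.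

Variable R : realType.

(* an MLN is a finite list of weighted formulas *)
Definition weight (D : finType) (Phi : seq (formula * R)) (om : interp D) : R :=
  expR (\sum_(p <- Phi) p.2 * (Ncount om p.1)%:R).

Definition kweight (D : finType) (Phi : seq (formula * R)) (k : nat)
    (om : interp D) : R :=
  expR (\sum_(p <- Phi | arity p.1 == k) p.2 * (Ncount om p.1)%:R).

Definition false_interp (D : finType) : interp D := [ffun => false].

(* w_k^max and w_k^min: max / min of the k-weight over interpretations on a
   k-element domain ('I_k).  The start value is itself one of the values. *)
Definition wkmax (Phi : seq (formula * R)) (k : nat) : R :=
  \big[Num.max/kweight Phi k (false_interp 'I_k)]_(om : interp 'I_k)
     kweight Phi k om.
Definition wkmin (Phi : seq (formula * R)) (k : nat) : R :=
  \big[Num.min/kweight Phi k (false_interp 'I_k)]_(om : interp 'I_k)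
     kweight Phi k om.

Definition max_arity (Phi : seq (formula * R)) : nat :=
  \max_(p <- Phi) arity p.1.

Definition restrict (D : finType) (P : pred D) (om : interp D)
    : interp {x : D | P x} :=
  [ffun a : gatom {x : D | P x} =>
     om (@Tagged Rel (tag a) (fun r => (ar r).-tuple D)
                 (map_tuple val (tagged a)))].

End MLN.

(* Each injective assignment of the k variables of a formula has a k-element
   image S.  Grouping the groundings counted by N(phi, om) by their image, those
   with S inside [n] (resp. inside {n+1, ..., n+m}) are the groundings counted
   for the restriction of om to that block, and every other k-set S straddles
   both blocks and contributes the groundings of om|S.  Hence
   w(om) = w(om|[n]) * w(om|{n+1..n+m}) * prod_k prod_S w_k(om|S), with
   C(n+m,k) - C(n,k) - C(m,k) factors at level k, each between w_k^min and
   w_k^max. *)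

From HB Require Import structures.
From mathcomp Require Import all_boot all_order all_algebra.
From mathcomp Require Import reals sequences exp.
Import Order.TTheory GRing.Theory Num.Theory.
Local Open Scope ring_scope.

Set Implicit Arguments. Unset Strict Implicit. Unset Printing Implicit Defensive.

Section Straddling.
Variables (D : finType) (L R : {pred D}).
Hypothesis LR : [disjoint L & R].

Definition straddles (k : nat) (S : {set D}) :=
  [&& #|S| == k, ~~ (S \subset L) & ~~ (S \subset R)].

Lemma big_ksets_split (V : Type) (idx : V) (op : Monoid.com_law idx) k
    (F : {set D} -> V) :
  (0 < k)%N ->
  \big[op/idx]_(S : {set D} | #|S| == k) F S =
  op (op (\big[op/idx]_(S : {set D} | (S \subset L) && (#|S| == k)) F S)
         (\big[op/idx]_(S : {set D} | (S \subset R) && (#|S| == k)) F S))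
     (\big[op/idx]_(S : {set D} | straddles k S) F S).
Proof.
move=> k_gt0; rewrite (bigID (fun S : {set D} => S \subset L)).
rewrite [X in op _ X](bigID (fun S : {set D} => S \subset R)) /= Monoid.mulmA.
congr (op (op _ _) _); apply: eq_bigl => S.
- by rewrite andbC.
- case SR: (S \subset R); rewrite ?andbF // andbT; case: eqP => //= S_k.
  apply/negP => SL; have /card_gt0P[x xS] : (0 < #|S|)%N by rewrite S_k.
  by move: (subsetP SR x xS); rewrite (disjointFr LR (subsetP SL x xS)).
- by rewrite /straddles andbA.
Qed.

Lemma card_ksets_split k : (0 < k)%N ->
  'C(#|D|, k) = ('C(#|L|, k) + 'C(#|R|, k) + #|straddles k|)%N.
Proof.
have draws (A : {pred D}) :
    #|[set S : {set D} | (S \subset A) && (#|S| == k)]| = 'C(#|A|, k).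
  rewrite -(cardsE A) -cards_draws; apply: eq_card => S; rewrite !inE.
  by congr (_ && _); apply: eq_subset_r => x; rewrite inE.
move=> k_gt0; rewrite -card_draws -!draws -[#|straddles k|]sum1_card.
by rewrite -!sum1dep_card (big_ksets_split _ (fun=> 1%N) k_gt0).
Qed.

End Straddling.

(* [pull (set_enum x0 k S) om] models om|S, transported to 'I_k along the
   enumeration of S; the default x0 of nth is never reached when #|S| = k. *)
Definition set_enum (D : finType) (x0 : D) (k : nat) (S : {set D}) (i : 'I_k) : D :=
  nth x0 (enum S) i.
Arguments set_enum {D} x0 k S i.

Lemma set_enum_inj (D : finType) (x0 : D) k (S : {set D}) :
  #|S| = k -> injective (set_enum x0 k S).
Proof.
move=> S_k i j /eqP; rewrite nth_uniq ?enum_uniq -?cardE ?S_k //.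
by move/eqP/val_inj.
Qed.

Lemma codom_set_enum (D : finType) (x0 : D) k (S : {set D}) :
  #|S| = k -> codom (set_enum x0 k S) =i S.
Proof.
move=> S_k x; apply/codomP/idP => [[i ->]|xS].
  by rewrite -mem_enum mem_nth // -cardE S_k.
have x_lt : (index x (enum S) < k)%N by rewrite -S_k cardE index_mem mem_enum.
by exists (Ordinal x_lt); rewrite /set_enum nth_index ?mem_enum.
Qed.

Lemma big_seq_by_level (T V : Type) (idx : V) (op : Monoid.com_law idx)
    (r : seq T) (a : T -> nat) (G : T -> nat -> V) d :
  all (fun p => (0 < a p <= d)%N) r ->
  \big[op/idx]_(p <- r) G p (a p) =
  \big[op/idx]_(1 <= k < d.+1) \big[op/idx]_(p <- r | a p == k) G p k.
Proof.
move=> /all_filterP <-; rewrite big_filter.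
under [RHS]eq_bigr do rewrite big_filter_cond big_mkcond.
rewrite exchange_big big_mkcond; apply: eq_bigr => p _ /=.
case: ifP => [/andP[a_gt0 a_le] | _]; last by rewrite big1_eq.
under eq_bigr do rewrite andTb eq_sym.
by rewrite -big_mkcond big_nat1_eq a_gt0 ltnS a_le.
Qed.

Lemma card_ord_ltn n m : #|(fun i : 'I_(n + m) => (i < n)%N)| = n.
Proof.
rewrite -[RHS]card_ord -(card_imset _ (@lshift_inj n m)); apply: eq_card => i.
apply/idP/imsetP => [i_lt | [j _ ->]]; last exact: ltn_ord j.
by exists (Ordinal i_lt); last apply: val_inj.
Qed.

Lemma card_ord_geq n m : #|(fun i : 'I_(n + m) => (n <= i)%N)| = m.
Proof.
have := cardC (fun i : 'I_(n + m) => (i < n)%N).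
rewrite card_ord card_ord_ltn => /addnI card_ge; rewrite -[RHS]card_ge.
by apply: eq_card => i; rewrite !inE; apply: leqNgt.
Qed.

Section MLN.
Variables (Rel : finType) (ar : Rel -> nat).

Definition pull (D1 D2 : finType) (h : D1 -> D2) (om : interp ar D2) : interp ar D1 :=
  [ffun a : gatom ar D1 =>
     om (@Tagged Rel (tag a) (fun r => (ar r).-tuple D2) (map_tuple h (tagged a)))].

Lemma eq_holds (D : finType) (om : interp ar D) s1 s2 f :
  s1 =1 s2 -> holds om s1 f = holds om s2 f.
Proof.
move=> s12; elim: f => //= [r t|x y|g ->|g -> h ->|g -> h ->] //.
  by rewrite (eq_map s12).
by rewrite !s12.
Qed.

Lemma holds_pull (D1 D2 : finType) (h : D1 -> D2) (om : interp ar D2) s f :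
  injective h -> holds (pull h om) s f = holds om (omap h \o s) f.
Proof.
move=> h_inj; elim: f => //= [r t|x y|g ->|g -> g' ->|g -> g' ->] //.
- have -> : pmap id (map (omap h \o s) t) = map h (pmap id (map s t)).
    by rewrite map_comp; elim: (map s t) => [|[?|] ?] //= ->.
  case: insubP => [u u_sz u_val|u_sz]; case: insubP => [v v_sz v_val|v_sz] //=.
  + rewrite ffunE; congr (om (Tagged _ _)); apply: val_inj.
    by rewrite /= v_val u_val.
  + by rewrite size_map u_sz in v_sz.
  + by rewrite size_map (negbTE u_sz) in v_sz.
- case: (s x) (s y) => [a|] [b|] //=.
  by rewrite !(inj_eq (@Some_inj _)) (inj_eq h_inj).
Qed.

Definition count_on (D : finType) (om : interp ar D) (f : formula ar) (A : {pred D})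
    : nat :=
  #|[set g : {ffun 'I_(arity f) -> D} |
      injectiveb g && holds om (assign g) f && [forall i, g i \in A]]|.

Lemma Ncount_count_on (D : finType) (om : interp ar D) f :
  Ncount om f = count_on om f [set: D].
Proof.
by apply: eq_card => g; rewrite !inE (introT forallP (fun i => in_setT (g i))) andbT.
Qed.

Lemma assign_comp (D1 D2 : finType) (h : D1 -> D2) (f : formula ar)
    (g : {ffun 'I_(arity f) -> D1}) x :
  assign [ffun i => h (g i)] x = omap h (assign g x).
Proof. by rewrite /assign; case: insub => //= i; rewrite ffunE. Qed.

Lemma Ncount_pull (D1 D2 : finType) (h : D1 -> D2) (A : {pred D2})
    (om : interp ar D2) f :
  injective h -> codom h =i A -> Ncount (pull h om) f = count_on om f A.
Proof.
move=> h_inj h_A.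
pose hg (g : {ffun 'I_(arity f) -> D1}) : {ffun 'I_(arity f) -> D2} :=
  [ffun i => h (g i)].
have hg_inj : injective hg.
  move=> g1 g2 /ffunP g12; apply/ffunP => i; apply: h_inj.
  by have := g12 i; rewrite !ffunE.
have holds_hg g : holds om (assign (hg g)) f = holds (pull h om) (assign g) f.
  by rewrite holds_pull // (eq_holds _ _ (assign_comp h g)).
rewrite /Ncount -(card_imset _ hg_inj); apply: eq_card => g'; rewrite inE.
apply/imsetP/idP => [[g]|/andP[/andP[g'_inj g'_holds] /forallP g'_A]].
  rewrite inE => /andP[/injectiveP g_inj g_holds] ->.
  rewrite holds_hg g_holds andbT; apply/andP; split.
    by apply/injectiveP => i j; rewrite !ffunE => /h_inj /g_inj.
  by apply/forallP => i; rewrite ffunE -h_A codom_f.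
have [g g_h] : exists g : {ffun 'I_(arity f) -> D1}, forall i, h (g i) = g' i.
  have /fin_all_exists[u u_h] : forall i, exists x, h x = g' i.
    by move=> i; move: (g'_A i); rewrite -h_A => /codomP[x ->]; exists x.
  by exists (finfun u) => i; rewrite ffunE.
have g'E : g' = hg g by apply/ffunP => i; rewrite ffunE g_h.
subst g'; exists g => //; rewrite inE -holds_hg g'_holds andbT.
apply/injectiveP => i j gij; apply: (injectiveP _ g'_inj).
by rewrite !ffunE gij.
Qed.

Lemma Ncount_restrict (D : finType) (P : pred D) (om : interp ar D) f :
  Ncount (restrict P om) f = count_on om f P.
Proof.
have -> : restrict P om = pull val om by apply/ffunP => a; rewrite !ffunE.
apply: Ncount_pull => [|x]; first exact: val_inj.
apply/codomP/idP => [[y ->]|Px]; first exact: valP.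
by exists (exist _ x Px).
Qed.

Lemma Ncount_pull_set_enum (D : finType) (x0 : D) (om : interp ar D) f (S : {set D}) :
  #|S| = arity f -> Ncount (pull (set_enum x0 (arity f) S) om) f = count_on om f S.
Proof.
by move=> S_k; apply: Ncount_pull; [apply: set_enum_inj | apply: codom_set_enum].
Qed.

Lemma count_on_by_image (D : finType) (om : interp ar D) f (A : {pred D}) :
  count_on om f A =
  (\sum_(S : {set D} | (S \subset A) && (#|S| == arity f)) count_on om f S)%N.
Proof.
pose img (g : {ffun 'I_(arity f) -> D}) := [set g i | i : 'I_(arity f)].
have img_sub g (B : {pred D}) : (img g \subset B) = [forall i, g i \in B].
  apply/subsetP/forallP => [gB i|gB _ /imsetP[i _ ->] //].
  by apply: gB; apply/imsetP; exists i.
have card_img (g : {ffun 'I_(arity f) -> D}) : injectiveb g -> #|img g| = arity f.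
  by move/injectiveP => g_inj; rewrite card_imset ?card_ord.
rewrite /count_on -sum1_card.
rewrite (partition_big img (fun S => (S \subset A) && (#|S| == arity f))); last first.
  move=> g; rewrite inE => /andP[/andP[g_inj _] gA].
  by rewrite img_sub gA card_img ?eqxx.
apply: eq_bigr => S /andP[SA /eqP S_k]; rewrite sum1dep_card; apply: eq_card => g.
rewrite !inE -!andbA -!img_sub.
apply/and4P/and3P => [[g_inj g_holds _ /eqP <-] | [g_inj g_holds gS]].
  by split=> //; apply: subxx.
split=> //; first by apply: subset_trans SA.
by rewrite eqEcard gS (card_img g g_inj) S_k leqnn.
Qed.

Lemma Ncount_split (D : finType) (x0 : D) (P Q : pred D) (om : interp ar D) f :
  [disjoint P & Q] -> (0 < arity f)%N ->
  Ncount om f = (Ncount (restrict P om) f + Ncount (restrict Q om) f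
    + \sum_(S | straddles P Q (arity f) S)
        Ncount (pull (set_enum x0 (arity f) S) om) f)%N.
Proof.
move=> PQ f_gt0; rewrite !Ncount_restrict Ncount_count_on !count_on_by_image.
rewrite [LHS](eq_bigl (fun S : {set D} => #|S| == arity f)) => [|S]; last first.
  by rewrite andb_idl // => _; apply/subsetP => x; rewrite inE.
rewrite (big_ksets_split PQ _ _ f_gt0); congr (_ + _)%N.
by apply: eq_bigr => S /and3P[/eqP S_k _ _]; rewrite Ncount_pull_set_enum.
Qed.

Variable R : realType.
Implicit Types (Phi : seq (formula ar * R)) (k : nat).

Lemma weight_by_arity (D : finType) Phi d (om : interp ar D) :
  all (fun p => (0 < arity p.1 <= d)%N) Phi ->
  weight Phi om = \prod_(1 <= k < d.+1) kweight Phi k om.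
Proof.
move=> Phi_ar; rewrite /weight /kweight -expR_sum; congr expR.
exact: (big_seq_by_level _ (fun p _ => p.2 * (Ncount om p.1)%:R) Phi_ar).
Qed.

Lemma kweight_split (D : finType) (x0 : D) (P Q : pred D) Phi k (om : interp ar D) :
  [disjoint P & Q] -> (0 < k)%N ->
  kweight Phi k om = kweight Phi k (restrict P om) * kweight Phi k (restrict Q om)
    * \prod_(S | straddles P Q k S) kweight Phi k (pull (set_enum x0 k S) om).
Proof.
move=> PQ k_gt0; rewrite /kweight -expR_sum -!expRD; congr expR.
rewrite exchange_big -!big_split /=; apply: eq_bigr => p /eqP p_k.
rewrite -mulr_sumr -!mulrDr; congr (_ * _).
by rewrite -p_k (Ncount_split x0 om PQ) ?p_k // !natrD natr_sum.
Qed.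

Lemma weight_split (D : finType) (x0 : D) (P Q : pred D) Phi d (om : interp ar D) :
  [disjoint P & Q] -> all (fun p => (0 < arity p.1 <= d)%N) Phi ->
  weight Phi om = weight Phi (restrict P om) * weight Phi (restrict Q om)
    * \prod_(1 <= k < d.+1) \prod_(S | straddles P Q k S)
        kweight Phi k (pull (set_enum x0 k S) om).
Proof.
move=> PQ Phi_ar; rewrite !(weight_by_arity _ Phi_ar) -!big_split /=.
by apply: eq_big_nat => k /andP[k_gt0 _]; apply: kweight_split.
Qed.

Lemma kweight_le_wkmax Phi k (om : interp ar 'I_k) : kweight Phi k om <= wkmax Phi k.
Proof. exact: le_bigmax. Qed.

Lemma wkmin_le_kweight Phi k (om : interp ar 'I_k) : wkmin Phi k <= kweight Phi k om.
Proof. exact: bigmin_le. Qed.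

Lemma wkmin_ge0 Phi k : 0 <= wkmin Phi k.
Proof. by apply: le_bigmin => [|om _]; apply: expR_ge0. Qed.

Lemma prod_kweight_le (I : finType) (A : pred I) Phi k (F : I -> interp ar 'I_k) :
  \prod_(i | A i) kweight Phi k (F i) <= wkmax Phi k ^+ #|A|.
Proof.
by rewrite -prodr_const; apply: ler_prod => i _; rewrite expR_ge0 kweight_le_wkmax.
Qed.

Lemma prod_kweight_ge (I : finType) (A : pred I) Phi k (F : I -> interp ar 'I_k) :
  wkmin Phi k ^+ #|A| <= \prod_(i | A i) kweight Phi k (F i).
Proof.
by rewrite -prodr_const; apply: ler_prod => i _; rewrite wkmin_ge0 wkmin_le_kweight.
Qed.

Lemma arity_le_max_arity Phi : all (fun p => (arity p.1 <= max_arity Phi)%N) Phi.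
Proof.
elim: Phi => //= p Phi IH; rewrite /max_arity big_cons leq_maxl /=.
by apply: sub_all IH => q /leq_trans; apply; rewrite leq_maxr.
Qed.

End MLN.

Theorem proposition1 (Rel : finType) (ar : Rel -> nat) (R : realType)
    (Phi : seq (formula ar * R)) (n m : nat) (om : interp ar 'I_(n + m)) :
  (0 < n)%N -> (0 < m)%N ->
  all (fun p => (0 < arity p.1)%N) Phi ->
  let d := max_arity Phi in
  let e := fun k : nat =>
    ('C(n + m, k))%:Z - ('C(n, k))%:Z - ('C(m, k))%:Z in
  weight Phi om <=
    weight Phi (restrict (fun i : 'I_(n + m) => (i < n)%N) om)
    * weight Phi (restrict (fun i : 'I_(n + m) => (n <= i)%N) om)
    * \prod_(1 <= k < d.+1) (wkmax Phi k) ^ (e k)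
  /\
  weight Phi om >=
    weight Phi (restrict (fun i : 'I_(n + m) => (i < n)%N) om)
    * weight Phi (restrict (fun i : 'I_(n + m) => (n <= i)%N) om)
    * \prod_(1 <= k < d.+1) (wkmin Phi k) ^ (e k).
Proof.
move=> n_gt0 _ Phi_gt0 d e.
pose first_n (i : 'I_(n + m)) := (i < n)%N.
pose last_m (i : 'I_(n + m)) := (n <= i)%N.
have x0 : 'I_(n + m) := Ordinal (ltn_addr m n_gt0).
have blocks_disj : [disjoint first_n & last_m].
  rewrite disjoint_subset; apply/subsetP => i i_lt.
  by rewrite inE; exact: negbT (ltn_geF i_lt).
have Phi_ar : all (fun p => (0 < arity p.1 <= d)%N) Phi.
  by rewrite all_predI Phi_gt0 arity_le_max_arity.
have e_card k : (0 < k)%N -> e k = #|straddles first_n last_m k|%:Z.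
  move=> k_gt0; have := card_ksets_split blocks_disj k_gt0.
  rewrite card_ord card_ord_ltn card_ord_geq /e => ->.
  by rewrite !PoszD -addrA -opprD [X in X - _]addrC addrK.
rewrite (weight_split x0 _ blocks_disj Phi_ar).
have wLR_ge0 : 0 <= weight Phi (restrict first_n om) * weight Phi (restrict last_m om).
  by rewrite mulr_ge0 ?expR_ge0.
split; apply: ler_wpM2l => //;
  rewrite [X in X <= _]big_nat_cond [X in _ <= X]big_nat_cond;
  apply: ler_prod => k /andP[/andP[k_gt0 _] _];
  rewrite (e_card k k_gt0) -exprnP; apply/andP; split.
- by apply: prodr_ge0 => S _; apply: expR_ge0.
- exact: prod_kweight_le.
- exact: exprn_ge0 (wkmin_ge0 _ _).
- exact: prod_kweight_ge.
Qed.
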